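(* Let $G$ be a connected bipartite graph with bipartition $V(G)=X \cup Y$, $|X|=s$ and $|Y|=t$, let $m$ be the number of edges and $\beta$ the matching number of $G$. If $0\leq \alpha \leq 1$, then $$S_k(A_{\alpha}(G))\geq \frac{\alpha m}{2}\left(\frac{1}{s}+\frac{1}{t}\right)+\frac{(1-\alpha)m}{\sqrt{st}}+(k-1)\left(\alpha -\frac{2(1-\alpha)\sqrt{st}}{s+t}\right)$$ for $1\leq k \leq \beta+1$.
   Context: All graphs are simple and undirected. $A_{\alpha}(G)=\alpha D(G)+(1-\alpha)A(G)$, where $A(G)$ is the adjacency matrix and $D(G)$ the diagonal degree matrix. For a real symmetric matrix $M$ with eigenvalues $\lambda_1(M)\geq\cdots\geq\lambda_n(M)$, $S_k(M)=\sum_{i=1}^k\lambda_i(M)$. The matching number is the maximum size of a matching. *)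

From HB Require Import structures.
From mathcomp Require Import all_boot all_order all_algebra.
From mathcomp Require Import reals.
Set Implicit Arguments. Unset Strict Implicit. Unset Printing Implicit Defensive.
Import Order.TTheory GRing.Theory Num.Theory.
Local Open Scope ring_scope.

Definition simple_graph (T : finType) (e : rel T) : Prop :=
  symmetric e /\ irreflexive e.

Definition connected_graph (T : finType) (e : rel T) : Prop :=
  forall x y : T, connect e x y.

Definition bipartition (T : finType) (e : rel T) (X Y : {set T}) : Prop :=
  [/\ X :&: Y = set0, X :|: Y = setT &
      forall x y, e x y -> (x \in X /\ y \in Y) \/ (x \in Y /\ y \in X)].

Definition edges (T : finType) (e : rel T) : {set {set T}} :=
  [set E : {set T} | [exists x, exists y, e x y && (E == [set x; y])]].

Definition nedges (T : finType) (e : rel T) : nat := #|edges e|.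

Definition is_matching (T : finType) (e : rel T) (M : {set {set T}}) : bool :=
  (M \subset edges e) &&
  [forall E1 in M, forall E2 in M, (E1 != E2) ==> [disjoint E1 & E2]].

Definition matching_number (T : finType) (e : rel T) : nat :=
  \max_(M : {set {set T}} | is_matching e M) #|M|.

Definition degree (T : finType) (e : rel T) (v : T) : nat := #|[set u | e v u]|.

Definition adjmx (R : nzRingType) (T : finType) (e : rel T) : 'M[R]_#|T| :=
  \matrix_(i, j) (if e (enum_val i) (enum_val j) then 1 else 0).

Definition degmx (R : nzRingType) (T : finType) (e : rel T) : 'M[R]_#|T| :=
  \matrix_(i, j) (if i == j then (degree e (enum_val i))%:R else 0).

Definition Aalpha (R : nzRingType) (T : finType) (e : rel T) (alpha : R)
  : 'M[R]_#|T| := alpha *: degmx R e + (1 - alpha) *: adjmx R e.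

Definition eigen_list (R : realDomainType) (n : nat) (M : 'M[R]_n)
  (l : seq R) : Prop :=
  sorted >=%R l /\ char_poly M = \prod_(x <- l) ('X - x%:P).

Definition Sk (R : realDomainType) (l : seq R) (k : nat) : R :=
  \sum_(i < k) l`_i.

(* Ky Fan's maximum principle: for a real symmetric matrix M and a k x n matrix P
   with orthonormal rows, tr (P M P^T) <= S_k(M); indeed, diagonalising M, the
   trace is a combination of the eigenvalues with weights in [0, 1] summing to k.
   Feed it k orthonormal test vectors.  The first one is 1/sqrt(2s) on X and
   1/sqrt(2t) on Y: as the degrees on either side of the bipartition add up to m,
   its A_alpha-quadratic form is exactly the first two terms of the bound.  The
   other k - 1 are sqrt(s/(s+t)) e_u - sqrt(t/(s+t)) e_v for k - 1 edges uv of a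
   maximum matching (u in X); they are orthogonal to each other because the edges
   are disjoint, and to the first one by the choice of coefficients.  Since the
   endpoints of an edge have degree at least 1, each of them contributes at least
   alpha - 2(1 - alpha) sqrt(st)/(s+t). *)

From HB Require Import structures.
From mathcomp Require Import all_boot all_order all_algebra.
From mathcomp Require Import reals complex.
From mathcomp Require Import ring lra zify.
Import Order.TTheory GRing.Theory Num.Theory.
Set Implicit Arguments. Unset Strict Implicit. Unset Printing Implicit Defensive.
Local Open Scope ring_scope.

(** * Ky Fan's maximum principle *)

Lemma weighted_sum_le_sum_largest (R : realFieldType) n (l : seq R)
    (r w : 'I_n -> R) k :
  sorted >=%R l -> perm_eq l [seq r j | j <- enum 'I_n] ->
  (forall j, 0 <= w j <= 1) -> \sum_j w j = k%:R -> (k <= n)%N ->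
  \sum_j r j * w j <= \sum_(i < k) l`_i.
Proof.
move=> l_sorted l_r w01 sum_w le_kn.
have size_l : size l = n by rewrite (perm_size l_r) size_map size_enum_ord.
set c := l`_k.-1; pose g x := Num.max (x - c) 0.
(* With [c] the [k]-th largest value, [r w <= c w + (r - c)^+] for [0 <= w <= 1];
   after summing, only the [k] largest values have a nonzero positive part. *)
have le_rw j : r j * w j <= c * w j + g (r j).
  have /andP[w0 w1] := w01 j; rewrite /g; case: (lerP 0 (r j - c)); nra.
apply: le_trans (ler_sum _ (fun j _ => le_rw j)) _.
rewrite big_split /= -mulr_sumr sum_w.
have -> : \sum_j g (r j) = \sum_(x <- l) g x.
  by rewrite (perm_big _ l_r) big_map big_enum.
have l_le i j : (i <= j < n)%N -> l`_j <= l`_i.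
  move=> /andP[le_ij lt_jn].
  apply: (sorted_leq_nth (leT := >=%R) _ _ 0 l_sorted); rewrite ?inE ?size_l //.
  - by move=> a b d /= ba db; exact: le_trans db ba.
  - by move=> a /=.
  - exact: leq_ltn_trans le_ij lt_jn.
rewrite (big_nth 0) size_l (big_cat_nat (leq0n k) le_kn) /=.
have top i : (0 <= i < k)%N -> g l`_i = l`_i - c.
  by move=> lt_ik; apply/max_idPl; rewrite subr_ge0; apply: l_le; lia.
have bottom i : (k <= i < n)%N -> g l`_i = 0.
  by move=> le_ki; apply/max_idPr; rewrite subr_le0; apply: l_le; lia.
rewrite (eq_big_nat _ _ top) (eq_big_nat _ _ bottom) big1_eq addr0.
rewrite big_mkord sumrB sumr_const card_ord -mulr_natr; lra.
Qed.

Lemma char_poly_conj (F : fieldType) n (U A : 'M[F]_n) :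
  U \in unitmx -> char_poly (invmx U *m A *m U) = char_poly A.
Proof.
move=> U_unit; rewrite /char_poly /char_poly_mx !map_mxM.
set pc := map_mx polyC.
have {1}-> : ('X%:M : 'M[{poly F}]_n) = pc (invmx U) *m 'X%:M *m pc U.
  by rewrite scalar_mxC -mulmxA -map_mxM mulVmx // map_mx1 mulmx1.
rewrite -mulmxBl -mulmxBr !det_mulmx !det_map_mx mulrC mulrA -rmorphM.
by rewrite -det_mulmx mulmxV // det1 rmorph1 mul1r.
Qed.

Lemma mulmx_trmxC_diag_ge0 (C : numClosedFieldType) m n (A : 'M[C]_(m, n)) i :
  0 <= (A *m A^t*)%sesqui i i.
Proof. by rewrite mxE; apply: sumr_ge0 => j _; rewrite !mxE mul_conjC_ge0. Qed.

Section UnitaryRows.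
Local Open Scope sesquilinear_scope.
Variables (C : numClosedFieldType) (k n : nat) (Q : 'M[C]_(k, n)).
Hypothesis Q_unitary : Q \is unitarymx.

Lemma unitarymx_proj_diag_le1 j : (Q^t* *m Q) j j <= 1.
Proof.
set E := 1%:M - Q^t* *m Q.
have E_herm : E^t* = E.
  by rewrite /E linearB /= trmx1 raddfB /= map_mx1 trmx_mul map_mxM trmxCK.
(* [E] is the orthogonal projection onto the complement of the row space of [Q] *)
have E_idem : E *m E^t* = E.
  rewrite E_herm /E mulmxBl !mulmxBr !mul1mx mulmx1.
  by rewrite mulmxA -(mulmxA _ Q) (unitarymxP Q_unitary) mulmx1 subrr subr0.
have := mulmx_trmxC_diag_ge0 E j.
by rewrite E_idem /E !mxE eqxx mulr1n subr_ge0.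
Qed.

Lemma mxtrace_unitarymx_proj : \tr (Q^t* *m Q) = k%:R.
Proof. by rewrite mxtrace_mulC (unitarymxP Q_unitary) mxtrace1. Qed.

End UnitaryRows.

Lemma mxtrace_diag_conj (C : numClosedFieldType) k n (Q : 'M[C]_(k, n)) d :
  \tr (Q *m diag_mx d *m Q^t*)%sesqui = \sum_j d 0 j * (Q^t* *m Q)%sesqui j j.
Proof.
rewrite mxtrace_mulC mulmxA; apply: eq_bigr => j _.
by rewrite mul_mx_diag mxE mulrC.
Qed.

Section RealSymmetric.
Local Open Scope sesquilinear_scope.
Variable R : realType.
Local Notation toC := (real_complex R).
Local Open Scope complex_scope.

Lemma trmxC_real m n (A : 'M[R]_(m, n)) : (map_mx toC A)^t* = (map_mx toC A)^T.
Proof. by apply/matrixP => i j; rewrite !mxE; exact: conjc_real. Qed.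

Lemma complex_ge0_real (z : R[i]) : 0 <= z -> z = (complex.Re z)%:C.
Proof. by case: z => a b /ger0_Im /= ->. Qed.

Lemma realsym_spectral n (M : 'M[R]_n) (l : seq R) :
    M^T = M -> char_poly M = \prod_(x <- l) ('X - x%:P) ->
  exists2 U : 'M[R[i]]_n, U \is unitarymx &
  exists2 r : 'I_n -> R, perm_eq l [seq r j | j <- enum 'I_n] &
    map_mx toC M = U^t* *m diag_mx (\row_j (r j)%:C) *m U.
Proof.
move=> M_sym M_char; set Mc := map_mx toC M.
have /orthomx_spectralP Mc_diag : Mc \is normalmx.
  by apply/normalmxP; rewrite trmxC_real /Mc map_trmx M_sym.
set U := spectralmx Mc in Mc_diag; set D := spectral_diag Mc in Mc_diag.
have U_unitary : U \is unitarymx := spectral_unitarymx Mc.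
have D_l : perm_eq (map toC l) [seq D 0 j | j <- enum 'I_n].
  apply: prod_XsubC_eq; rewrite big_map -map_prod_XsubC -M_char.
  rewrite map_char_poly -/Mc {1}Mc_diag char_poly_conj ?unitarymx_unit //.
  rewrite char_poly_trig ?diag_mx_is_trig // big_map big_enum /=.
  by apply: eq_bigr => j _; rewrite mxE eqxx mulr1n.
have D_real j : D 0 j = (complex.Re (D 0 j))%:C.
  have : D 0 j \in map toC l by rewrite (perm_mem D_l) map_f // mem_enum.
  by case/mapP => x _ ->.
exists U => //; exists (fun j => complex.Re (D 0 j)).
  apply: (perm_map_inj (@complexI R)); rewrite -map_comp.
  by rewrite (eq_map (g := fun j => D 0 j)) // => j /=; rewrite -D_real.
rewrite Mc_diag invmx_unitary //; congr (_ *m diag_mx _ *m _).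
by apply/rowP => j; rewrite mxE -D_real.
Qed.

Lemma ky_fan n (M : 'M[R]_n) l k (P : 'M[R]_(k, n)) :
  M^T = M -> eigen_list M l -> P *m P^T = 1%:M ->
  \tr (P *m M *m P^T) <= Sk l k.
Proof.
move=> M_sym [l_sorted M_char] P_orth.
have [U U_unitary [r l_r M_diag]] := realsym_spectral M_sym M_char.
set Pc := map_mx toC P.
have Pc_unitary : Pc \is unitarymx.
  by apply/unitarymxP; rewrite trmxC_real /Pc map_trmx -map_mxM P_orth map_mx1.
set Q := Pc *m U^t*.
have Q_unitary : Q \is unitarymx by rewrite mul_unitarymx ?trmxC_unitary.
pose w j := complex.Re ((Q^t* *m Q) j j).
have w_ge0 j : 0 <= (Q^t* *m Q) j j.
  by have := mulmx_trmxC_diag_ge0 (Q^t*) j; rewrite trmxCK.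
have wE j : (Q^t* *m Q) j j = (w j)%:C by rewrite [LHS]complex_ge0_real.
have trE : \tr (P *m M *m P^T) = \sum_j r j * w j.
  apply: (@complexI R).
  rewrite -(trace_map_mx toC) !map_mxM -map_trmx -/Pc M_diag -trmxC_real.
  have -> : Pc *m (U^t* *m diag_mx (\row_j (r j)%:C) *m U) *m Pc^t*
      = Q *m diag_mx (\row_j (r j)%:C) *m Q^t*.
    by rewrite /Q trmx_mul map_mxM trmxCK !mulmxA.
  rewrite mxtrace_diag_conj rmorph_sum; apply: eq_bigr => j _.
  by rewrite mxE wE rmorphM.
have le_kn : (k <= n)%N.
  by rewrite -(mxrank_unitary Q_unitary) rank_leq_col.
rewrite trE.
apply: (weighted_sum_le_sum_largest l_sorted l_r) le_kn => [j|].
  by rewrite -!lecR -wE w_ge0 unitarymx_proj_diag_le1.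
apply: (@complexI R).
rewrite rmorph_sum rmorph_nat -(mxtrace_unitarymx_proj Q_unitary).
by apply: eq_bigr => j _; rewrite wE.
Qed.

End RealSymmetric.

(** * The quadratic form of A_alpha *)

Section QuadraticForm.
Variables (R : realFieldType) (T : finType) (e : rel T).

Definition dotv (g h : T -> R) : R := \sum_v g v * h v.

Definition funmx k (f : 'I_k -> T -> R) : 'M[R]_(k, #|T|) :=
  \matrix_(i, j) f i (enum_val j).

Definition Aalpha_qform (alpha : R) (g : T -> R) : R :=
  alpha * \sum_v (degree e v)%:R * g v ^+ 2
  + (1 - alpha) * \sum_v \sum_w (e v w)%:R * (g v * g w).

Lemma dotvC g h : dotv g h = dotv h g.
Proof. by apply: eq_bigr => v _; rewrite mulrC. Qed.

Lemma sum_enum_val (F : T -> R) : \sum_(j < #|T|) F (enum_val j) = \sum_v F v.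
Proof. by rewrite -(big_enum_val (A := T)). Qed.

Lemma funmx_gram k (f : 'I_k -> T -> R) i j :
  (funmx f *m (funmx f)^T) i j = dotv (f i) (f j).
Proof. by rewrite mxE /dotv -sum_enum_val; apply: eq_bigr => c _; rewrite !mxE. Qed.

Lemma Aalpha_enum_rank (alpha : R) v w :
  Aalpha e alpha (enum_rank v) (enum_rank w)
  = alpha * ((v == w)%:R * (degree e v)%:R) + (1 - alpha) * (e v w)%:R.
Proof.
rewrite !mxE (inj_eq enum_rank_inj) !enum_rankK.
by case: (v == w); case: (e v w); rewrite /= ?mul1r ?mul0r ?mulr1 ?mulr0.
Qed.

Lemma Aalpha_qformE (alpha : R) g : Aalpha_qform alpha g
  = \sum_v \sum_w g v * Aalpha e alpha (enum_rank v) (enum_rank w) * g w.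
Proof.
rewrite /Aalpha_qform !mulr_sumr -big_split /=; apply: eq_bigr => v _.
under [RHS]eq_bigr => w _ do rewrite Aalpha_enum_rank mulrDr mulrDl.
rewrite big_split /= mulr_sumr; congr (_ + _); last by apply: eq_bigr => w _; ring.
rewrite (bigD1 v) //= eqxx big1 ?addr0 => [|w /negbTE vw]; first by rewrite mul1r; ring.
by rewrite eq_sym vw mul0r; ring.
Qed.

Lemma mxtrace_Aalpha_funmx (alpha : R) k (f : 'I_k -> T -> R) :
  \tr (funmx f *m Aalpha e alpha *m (funmx f)^T)
  = \sum_i Aalpha_qform alpha (f i).
Proof.
apply: eq_bigr => i _; rewrite Aalpha_qformE mxE exchange_big -!sum_enum_val.
apply: eq_bigr => c _; rewrite !mxE mulr_suml -sum_enum_val.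
by apply: eq_bigr => d _; rewrite !mxE !enum_valK.
Qed.

End QuadraticForm.

Lemma Aalpha_tr (R : nzRingType) (T : finType) (e : rel T) (alpha : R) :
  symmetric e -> (Aalpha e alpha)^T = Aalpha e alpha.
Proof.
move=> e_sym; apply/matrixP => i j; rewrite !mxE eq_sym e_sym.
by case: eqP => [->|].
Qed.

Lemma sum_Aalpha_qform_le_Sk (R : realType) (T : finType) (e : rel T) (alpha : R)
    (l : seq R) k (f : 'I_k -> T -> R) :
  symmetric e -> eigen_list (Aalpha e alpha) l ->
  (forall i j, dotv (f i) (f j) = (i == j)%:R) ->
  \sum_i Aalpha_qform e alpha (f i) <= Sk l k.
Proof.
move=> e_sym l_eig f_orth; rewrite -mxtrace_Aalpha_funmx.
apply: ky_fan l_eig _; first exact: Aalpha_tr.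
by apply/matrixP => i j; rewrite funmx_gram f_orth mxE.
Qed.

(** * Bipartite graphs *)

Section Bipartite.
Variables (T : finType) (e : rel T) (X Y : {set T}).
Hypotheses (e_sym : symmetric e) (XY : bipartition e X Y).

Lemma bipartition_sym : bipartition e Y X.
Proof.
case: XY => XY0 XYT XYe; split; rewrite 1?setIC 1?setUC //.
by move=> x y /XYe []; [right | left].
Qed.

Lemma bipartition_notin v : (v \in Y) = (v \notin X).
Proof.
case: XY => XY0 XYT _; apply/idP/idP => [vY | vX].
  by apply/negP => vX; have := in_set0 v; rewrite -XY0 inE vX vY.
by have := in_setT v; rewrite -XYT inE (negbTE vX).
Qed.

Lemma bipartition_edge x y : e x y -> x \in X -> y \in Y.
Proof.
case: XY => XY0 _ XYe /XYe [[] // | [xY _] xX].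
by have := in_set0 x; rewrite -XY0 inE xX xY.
Qed.

Lemma edges_bipartition E : E \in edges e ->
  exists x y, [/\ x \in X, y \in Y, e x y & E = [set x; y]].
Proof.
rewrite inE => /existsP[x /existsP[y /andP[exy /eqP->]]].
case: XY => _ _ /(_ x y exy) [[xX yY] | [xY yX]]; first by exists x, y.
by exists y, x; rewrite setUC e_sym.
Qed.

Lemma sum_degree_side : (\sum_(v in X) degree e v)%N = nedges e.
Proof.
pose S := [set p : T * T | (p.1 \in X) && e p.1 p.2].
have -> : (\sum_(v in X) degree e v)%N = #|S|.
  rewrite -sum1_card (eq_bigl (fun p : T * T => (p.1 \in X) && e p.1 p.2)).
    rewrite -(pair_big_dep (fun v => v \in X) e (fun _ _ => 1%N)) /=.
    apply: eq_bigr => v _; rewrite /degree -sum1_card.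
    by apply: eq_bigl => w; rewrite inE.
  by move=> p; rewrite inE.
rewrite /nedges -(card_in_imset (f := fun p : T * T => [set p.1; p.2])).
  congr #|pred_of_set _|; apply/setP => E; apply/imsetP/idP.
    case=> -[x y]; rewrite inE /= => /andP[_ exy] ->.
    by rewrite inE; apply/existsP; exists x; apply/existsP; exists y; rewrite exy eqxx.
  case/edges_bipartition => x [y [xX _ exy ->]].
  by exists (x, y); rewrite // inE /= xX exy.
move=> [x y] [x' y']; rewrite !inE /= => /andP[xX exy] /andP[x'X ex'y'] E.
have yX : y \notin X by rewrite -bipartition_notin (bipartition_edge exy).
have y'X : y' \notin X by rewrite -bipartition_notin (bipartition_edge ex'y').
have : x \in [set x'; y'] by rewrite -E !inE eqxx.
have : y \in [set x'; y'] by rewrite -E !inE eqxx orbT.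
rewrite !inE => /orP[/eqP yx' | /eqP ->]; first by move: yX; rewrite yx' x'X.
by case/orP => [/eqP -> | /eqP xy'] //; move: y'X; rewrite -xy' xX.
Qed.

End Bipartite.

Section TestVectors.
Variables (R : realFieldType) (T : finType) (e : rel T) (X Y : {set T}).
Hypotheses (e_sym : symmetric e) (e_irr : irreflexive e) (XY : bipartition e X Y).

Lemma sum_degree_sideC : (\sum_(v | v \notin X) degree e v)%N = nedges e.
Proof.
rewrite -(sum_degree_side e_sym (bipartition_sym XY)).
by apply: eq_bigl => v; rewrite (bipartition_notin XY).
Qed.

Definition sidevec (a b : R) (v : T) : R := if v \in X then a else b.

Definition edgevec (c d : R) (u v w : T) : R :=
  c * (w == u)%:R - d * (w == v)%:R.

Lemma dotv_sidevec a b :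
  dotv (sidevec a b) (sidevec a b) = a ^+ 2 * #|X|%:R + b ^+ 2 * #|Y|%:R.
Proof.
rewrite /dotv (bigID (mem X)) /=; congr (_ + _).
  rewrite -sum1_card natr_sum mulr_sumr.
  by apply: eq_bigr => v /= vX; rewrite /sidevec vX mulr1 expr2.
rewrite -sum1_card natr_sum mulr_sumr.
apply: eq_big => v; first by rewrite (bipartition_notin XY).
by move=> vX; rewrite /sidevec (negbTE vX) mulr1 expr2.
Qed.

Lemma sum_degree_total : \sum_v (degree e v)%:R = 2 * (nedges e)%:R :> R.
Proof.
rewrite -natr_sum (bigID (mem X)) /= (sum_degree_side e_sym XY).
by rewrite sum_degree_sideC natrD mulr_natl mulr2n.
Qed.

Lemma sum_degree_sidevec a b :
  \sum_v (degree e v)%:R * sidevec a b v ^+ 2 = (a ^+ 2 + b ^+ 2) * (nedges e)%:R.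
Proof.
rewrite (bigID (mem X)) /= mulrDl; congr (_ + _).
  rewrite -(sum_degree_side e_sym XY) natr_sum mulr_sumr.
  by apply: eq_bigr => v vX; rewrite /sidevec vX mulrC.
rewrite -sum_degree_sideC natr_sum mulr_sumr.
by apply: eq_bigr => v /negbTE vX; rewrite /sidevec vX mulrC.
Qed.

Lemma sum_adj_sidevec a b :
  \sum_v \sum_w (e v w)%:R * (sidevec a b v * sidevec a b w)
  = a * b * \sum_v (degree e v)%:R.
Proof.
rewrite mulr_sumr; apply: eq_bigr => v _; rewrite /degree -sum1_card natr_sum.
rewrite mulr_sumr [RHS]big_mkcond /=; apply: eq_bigr => w _; rewrite inE.
case evw: (e v w); rewrite /= ?mul0r // mul1r mulr1 /sidevec.
case: XY => _ _ /(_ v w evw) [[vX wY] | [vY wX]].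
  by move: wY; rewrite (bipartition_notin XY) vX => /negbTE ->.
by move: vY; rewrite (bipartition_notin XY) wX mulrC => /negbTE ->.
Qed.

Lemma Aalpha_qform_sidevec alpha a b :
  Aalpha_qform e alpha (sidevec a b)
  = (alpha * (a ^+ 2 + b ^+ 2) + 2 * (1 - alpha) * (a * b)) * (nedges e)%:R.
Proof.
rewrite /Aalpha_qform sum_degree_sidevec sum_adj_sidevec sum_degree_total.
by rewrite [RHS]mulrDl (mulrA alpha); congr (_ + _); ring.
Qed.

Lemma dotv_edgevec c d u v g : dotv (edgevec c d u v) g = c * g u - d * g v.
Proof.
have dotv_delta z : \sum_w (w == z)%:R * g w = g z.
  rewrite (bigD1 z) //= eqxx mul1r big1 ?addr0 // => w /negbTE ->.
  by rewrite mul0r.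
rewrite /dotv /edgevec; under eq_bigr => w _ do rewrite mulrBl -!mulrA.
by rewrite sumrB -!mulr_sumr !dotv_delta.
Qed.

Lemma edgevec_in c d u v : u != v ->
  edgevec c d u v u = c /\ edgevec c d u v v = - d.
Proof.
move=> /negbTE uv; rewrite /edgevec !eqxx uv eq_sym uv.
by split; rewrite ?mulr1 ?mulr0 ?subr0 ?sub0r.
Qed.

Lemma edgevec_out c d u v w : w \notin [set u; v] -> edgevec c d u v w = 0.
Proof.
rewrite /edgevec !inE negb_or => /andP[/negbTE -> /negbTE ->].
by rewrite !mulr0 subrr.
Qed.

Lemma Aalpha_qform_edgevec alpha c d u v : e u v ->
  Aalpha_qform e alpha (edgevec c d u v)
  = alpha * (c ^+ 2 * (degree e u)%:R + d ^+ 2 * (degree e v)%:R)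
    - 2 * (1 - alpha) * (c * d).
Proof.
move=> euv; have uv : u != v by apply: contraTneq euv => ->; rewrite e_irr.
have [gu gv] := edgevec_in c d uv.
rewrite /Aalpha_qform.
have -> : \sum_w (degree e w)%:R * edgevec c d u v w ^+ 2
    = dotv (edgevec c d u v) (fun w => (degree e w)%:R * edgevec c d u v w).
  by apply: eq_bigr => w _; rewrite expr2 mulrCA.
have -> : \sum_w \sum_z (e w z)%:R * (edgevec c d u v w * edgevec c d u v z)
    = dotv (edgevec c d u v)
        (fun w => dotv (edgevec c d u v) (fun z => (e w z)%:R)).
  apply: eq_bigr => w _; rewrite /dotv mulr_sumr.
  by apply: eq_bigr => z _; rewrite [LHS]mulrC -mulrA.
by rewrite !dotv_edgevec gu gv !e_irr (e_sym v u) euv /= mulr1n mulr0n; ring.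
Qed.

Lemma Aalpha_qform_edgevec_ge alpha c d u v : 0 <= alpha -> e u v ->
  alpha * (c ^+ 2 + d ^+ 2) - 2 * (1 - alpha) * (c * d)
  <= Aalpha_qform e alpha (edgevec c d u v).
Proof.
move=> alpha0 euv; rewrite Aalpha_qform_edgevec // lerD2r ler_wpM2l //.
have deg_ge1 w z : e w z -> 1 <= (degree e w)%:R :> R.
  by move=> ewz; rewrite ler1n; apply/card_gt0P; exists z; rewrite inE.
apply: lerD; rewrite -[X in X <= _]mulr1 ler_wpM2l ?sqr_ge0 //.
  exact: deg_ge1 euv.
by apply: (deg_ge1 _ u); rewrite e_sym.
Qed.

Section Family.
Variables (a b c d : R) (k : nat) (u v : 'I_k -> T).

Definition testvec (i : 'I_k.+1) : T -> R :=
  if unlift ord0 i is Some p then edgevec c d (u p) (v p) else sidevec a b.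

Hypotheses (side_unit : a ^+ 2 * #|X|%:R + b ^+ 2 * #|Y|%:R = 1)
  (side_edge_orth : a * c = b * d) (edge_unit : c ^+ 2 + d ^+ 2 = 1).
Hypotheses (uX : forall p, u p \in X) (vY : forall p, v p \in Y)
  (euv : forall p, e (u p) (v p))
  (uv_disj : forall p p', p != p' -> [disjoint [set u p; v p] & [set u p'; v p']]).

Lemma dotv_testvec i j : dotv (testvec i) (testvec j) = (i == j)%:R.
Proof.
have uv p : u p != v p by apply: contraTneq (euv p) => ->; rewrite e_irr.
have vX p : v p \notin X by rewrite -(bipartition_notin XY).
have side_at_edge p : dotv (sidevec a b) (edgevec c d (u p) (v p)) = 0.
  rewrite dotvC dotv_edgevec /sidevec uX (negbTE (vX p)).
  by rewrite [c * _]mulrC [d * _]mulrC side_edge_orth subrr.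
rewrite /testvec.
case: (unliftP ord0 i) => [p ->|->]; case: (unliftP ord0 j) => [p' ->|->].
- rewrite dotv_edgevec (inj_eq lift_inj); have [<-|pp'] := eqVneq p p'.
    by have [-> ->] := edgevec_in c d (uv p); rewrite mulrN opprK -!expr2.
  have /disjointFr out := uv_disj pp'.
  have up : u p \notin [set u p'; v p'] by rewrite out // !inE eqxx.
  have vp : v p \notin [set u p'; v p'] by rewrite out // !inE eqxx orbT.
  by rewrite !edgevec_out // !mulr0 subrr.
- by rewrite dotvC side_at_edge eq_sym (negbTE (neq_lift _ _)).
- by rewrite side_at_edge (negbTE (neq_lift _ _)).
- by rewrite dotv_sidevec side_unit eqxx.
Qed.

Lemma sum_Aalpha_qform_testvec_ge alpha : 0 <= alpha ->
  (alpha * (a ^+ 2 + b ^+ 2) + 2 * (1 - alpha) * (a * b)) * (nedges e)%:R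
    + k%:R * (alpha - 2 * (1 - alpha) * (c * d))
  <= \sum_i Aalpha_qform e alpha (testvec i).
Proof.
move=> alpha0; rewrite big_ord_recl /testvec unlift_none Aalpha_qform_sidevec.
rewrite lerD2l mulr_natl -[k in _ *+ k]card_ord -sumr_const; apply: ler_sum => p _.
rewrite liftK; apply: le_trans (Aalpha_qform_edgevec_ge c d alpha0 (euv p)).
by rewrite edge_unit mulr1.
Qed.

End Family.

End TestVectors.

Section Matching.
Variables (T : finType) (e : rel T) (X Y : {set T}).
Hypotheses (e_sym : symmetric e) (XY : bipartition e X Y).

Lemma matching_number_witness :
  exists2 M, is_matching e M & #|M| = matching_number e.
Proof.
have set0_matching : is_matching e set0.
  by rewrite /is_matching sub0set; apply/forall_inP => E; rewrite in_set0.
exists [arg max_(M > set0 | is_matching e M) #|M|]; first by case: arg_maxnP.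
by rewrite /matching_number (bigop.bigmax_eq_arg set0 set0_matching).
Qed.

Lemma bipartite_matching_edges k : (k <= matching_number e)%N ->
  exists u v : 'I_k -> T,
  [/\ forall p, u p \in X, forall p, v p \in Y, forall p, e (u p) (v p)
    & forall p p', p != p' -> [disjoint [set u p; v p] & [set u p'; v p']]].
Proof.
have [M /andP[M_edges /forall_inP M_disj] <-] := matching_number_witness.
move=> le_kM; pose E (p : 'I_k) := nth set0 (enum M) p.
have lt_pM (p : 'I_k) : (p < size (enum M))%N by rewrite -cardE (leq_trans _ le_kM).
have E_M p : E p \in M by rewrite -mem_enum mem_nth.
have E_disj p p' : p != p' -> [disjoint E p & E p'].
  move=> pp'; move/forall_inP/(_ _ (E_M p'))/implyP: (M_disj _ (E_M p)); apply.
  by rewrite /E nth_uniq ?enum_uniq ?lt_pM.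
have E_orient p : exists uv : T * T,
    [/\ uv.1 \in X, uv.2 \in Y, e uv.1 uv.2 & E p = [set uv.1; uv.2]].
  have [x [y ?]] := edges_bipartition e_sym XY (subsetP M_edges _ (E_M p)).
  by exists (x, y).
have [uv uvP] := fin_all_exists E_orient.
exists (fun p => (uv p).1), (fun p => (uv p).2).
split=> [p | p | p | p p' /E_disj]; try by case: (uvP p).
by case: (uvP p) => _ _ _ <-; case: (uvP p') => _ _ _ <-.
Qed.

End Matching.

Lemma exists_pos_sqrt {R : rcfType} (x : R) :
  0 < x -> exists2 y : R, 0 < y & x = y ^+ 2.
Proof. by move=> x0; exists (Num.sqrt x); rewrite ?sqrtr_gt0 ?sqr_sqrtr // ltW. Qed.

Lemma bipartite_test_coeffs (R : rcfType) (s t : R) : 0 < s -> 0 < t ->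
  exists a b c d : R,
  [/\ a ^+ 2 * s + b ^+ 2 * t = 1, a * c = b * d & c ^+ 2 + d ^+ 2 = 1] /\
  [/\ a ^+ 2 + b ^+ 2 = (1 / s + 1 / t) / 2, a * b = (2 * Num.sqrt (s * t))^-1
    & c * d = Num.sqrt (s * t) / (s + t)].
Proof.
move=> /exists_pos_sqrt[x x0 ->] /exists_pos_sqrt[y y0 ->].
have [z z0 xyz] := exists_pos_sqrt (addr_gt0 (exprn_gt0 2 x0) (exprn_gt0 2 y0)).
have [q q0 q2] := exists_pos_sqrt (ltr0Sn R 1).
have sqrt_xy : Num.sqrt (x ^+ 2 * y ^+ 2) = x * y.
  by rewrite -exprMn sqrtr_sqr ger0_norm // mulr_ge0 // ltW.
have [xn yn zn qn] : [/\ x != 0, y != 0, z != 0 & q != 0] by split; exact: lt0r_neq0.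
exists (q * x)^-1, (q * y)^-1, (x / z), (y / z); rewrite sqrt_xy.
split; split.
- by rewrite !exprVn !exprMn -q2; field; rewrite xn yn.
- by field; rewrite xn yn zn qn.
- by rewrite !expr_div_n -mulrDl xyz divff // expf_neq0.
- by rewrite !exprVn !exprMn -q2; field; rewrite xn yn.
- rewrite -invfM mulrACA -expr2 -q2.
  by field; rewrite xn yn.
- by rewrite xyz; field; rewrite zn.
Qed.

Theorem theorem5p3 (R : realType) (T : finType) (e : rel T) (X Y : {set T})
  (alpha : R) (k : nat) (l : seq R) :
  simple_graph e -> connected_graph e -> bipartition e X Y ->
  (0 < #|X|)%N -> (0 < #|Y|)%N ->
  0 <= alpha -> alpha <= 1 ->
  (1 <= k)%N -> (k <= (matching_number e).+1)%N ->
  eigen_list (@Aalpha R T e alpha) l ->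
  let s : R := #|X|%:R in
  let t : R := #|Y|%:R in
  let m : R := (nedges e)%:R in
  alpha * m / 2 * (1 / s + 1 / t) + (1 - alpha) * m / Num.sqrt (s * t)
    + (k%:R - 1) * (alpha - 2 * (1 - alpha) * Num.sqrt (s * t) / (s + t))
  <= Sk l k.
Proof.
move=> [e_sym e_irr] _ XY X0 Y0 alpha0 _; case: k => // k _ le_k l_eig.
cbv zeta; set s : R := #|X|%:R; set t : R := #|Y|%:R; set m : R := (nedges e)%:R.
have [u [v [uX vY euv uv_disj]]] := bipartite_matching_edges e_sym XY le_k.
have [s0 t0] : 0 < s /\ 0 < t by rewrite !ltr0n.
have [a [b [c [d [[side_unit side_edge edge_unit] [ab2 ab cd]]]]]] :=
  bipartite_test_coeffs s0 t0.
have orth := dotv_testvec e_irr XY side_unit side_edge edge_unit uX vY euv uv_disj.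
apply: le_trans (sum_Aalpha_qform_le_Sk e_sym l_eig orth).
apply: le_trans (sum_Aalpha_qform_testvec_ge e_sym e_irr XY a b edge_unit euv alpha0).
have st0 : Num.sqrt (s * t) != 0 by rewrite sqrtr_eq0 -ltNge mulr_gt0.
rewrite ab2 ab cd [_ * (Num.sqrt _ / _)]mulrA -[k.+1%:R]natr1 addrK -/m lerD2r.
rewrite le_eqVlt; apply/orP; left.
by apply/eqP; field; apply/and3P; split; rewrite // lt0r_neq0.
Qed.
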